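(* In the hexagonal three-direction setting with the random model described in the context, let $k\ge1$, let $X=\sum_{r\in R}X_r$ be the number of zero measurements and $N_R^0=\mathbb{E}[X]=\sum_{r\in R}(1-|r|/|C|)^k$. Set $\overline{p}_d=1-\min_{r\in R}\frac{|r|}{|C|}=1-\frac{2(d+1)}{3d^2+1}$. Then for every $\delta>0$, \[ \Pr\big[|X-N_R^0|\ge\delta\big]\le 2\exp\Big(-\frac{1-\overline{p}_d^{\,2}}{18\,(1-\overline{p}_d^{\,2k})}\,\delta^2\Big). \]
   Context: Hexagonal setting. Let $d\ge 3$ be an odd integer. The set of cells is $C=\{(i_1,i_2)\in\mathbb{Z}^2 : |i_1|\le (d-1)/2,\ |i_2|\le (d-1)/2,\ |i_1+i_2|\le (d-1)/2\}$ (the cell centers are $i_1 d^1+i_2 d^2$ with $d^1=\tfrac12(\sqrt3,1)$, $d^2=(0,1)$, forming a hexagon), so $|C|=(3d^2+1)/4$. There are three directions of projection rays: $R_1$ consists of the $d$ rays $\{(i_1,i_2)\in C: i_1=a\}$, $R_2$ of the $d$ rays $\{(i_1,i_2)\in C: i_2=a\}$, and $R_3$ of the $d$ rays $\{(i_1,i_2)\in C: i_1+i_2=a\}$, for $a\in\{-(d-1)/2,\dots,(d-1)/2\}$; a ray is identified with the set of cells it meets, $|r|$ denotes its number of cells, and $R=R_1\cup R_2\cup R_3$, $|R|=3d$. Each cell $c$ lies on exactly one ray $r_i(c)\in R_i$ for each $i=1,2,3$. Random model: $k$ cells are drawn independently and uniformly from $C$ (with replacement; a cell may be drawn several times). For $r\in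 R$, $X_r\in\{0,1\}$ equals $1$ (a ''zero measurement'') iff none of the drawn cells lies on $r$. *)

From Stdlib Require Import Reals ZArith.
From mathcomp Require Import all_boot.

Set Implicit Arguments.
Unset Strict Implicit.
Unset Printing Implicit Defensive.

Definition hh (d : nat) : Z := Z.of_nat ((d - 1)./2).

(* coordinate of index i : 'I_d, shifted to range over {-h,...,h} *)
Definition crd (d : nat) (i : 'I_d) : Z := (Z.of_nat (nat_of_ord i) - hh d)%Z.

(* |i1| <= h and |i2| <= h hold automatically for indices in 'I_d (d odd);
   the remaining hexagon constraint is |i1 + i2| <= h. *)
Definition inC (d : nat) (x : 'I_d * 'I_d) : bool :=
  [&& (Z.abs (crd x.1) <=? hh d)%Z, (Z.abs (crd x.2) <=? hh d)%Z
    & (Z.abs (crd x.1 + crd x.2) <=? hh d)%Z].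

Definition cell (d : nat) := {x : 'I_d * 'I_d | inC x}.

(* Rays: direction (0,1,2 ~ R_1,R_2,R_3) and offset a (via crd) *)
Definition ray (d : nat) := ('I_3 * 'I_d)%type.

Definition on_ray (d : nat) (r : ray d) (c : cell d) : bool :=
  let x := val c in
  match nat_of_ord r.1 with
  | 0 => Z.eqb (crd x.1) (crd r.2)
  | 1 => Z.eqb (crd x.2) (crd r.2)
  | _ => Z.eqb (crd x.1 + crd x.2)%Z (crd r.2)
  end.

Definition ray_size (d : nat) (r : ray d) : nat := #|[pred c : cell d | on_ray r c]|.

Definition ncells (d : nat) : nat := #|{: cell d}|.

(* outcomes: k independent uniform draws from C (with replacement) *)
Definition draw (d k : nat) := {ffun 'I_k -> cell d}.

Definition Xr (d k : nat) (r : ray d) (w : draw d k) : bool :=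
  [forall j, ~~ on_ray r (w j)].

Definition Xcount (d k : nat) (w : draw d k) : nat := \sum_(r : ray d) Xr r w.

Local Open Scope R_scope.

Definition NR0 (d k : nat) : R :=
  \big[Rplus/R0]_(r : ray d)
     pow (Rminus R1 (Rdiv (INR (ray_size r)) (INR (ncells d)))) k.

Definition prob (d k : nat) (E : pred (draw d k)) : R :=
  Rdiv (INR #|E|) (INR #|{: draw d k}|).

Definition pbar (d : nat) : R :=
  Rminus 1 (Rdiv (Rmult 2 (Rplus (INR d) 1))
                   (Rplus (Rmult 3%R (pow (INR d) 2)) 1)).

From Stdlib Require Import Reals Lra Lia ZArith.
From Coquelicot Require Import Coquelicot.
From mathcomp Require Import all_boot all_algebra.
From mathcomp Require Import Rstruct zify.
Import GRing.Theory Num.Theory.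

(* Reveal the k uniform draws one at a time.  Given a set S of rays already
   known to be hit, the number of still-empty rays outside S after k further
   draws has mean m_k(S) = sum_(r \notin S) q_r^k, where q_r = 1 - |r|/|C| is
   the probability that one draw misses r.  Drawing a cell c turns S into
   S u {rays through c}, so the increments m_k(S u rays(c)) - m_(k+1)(S) of
   this Doob martingale are centred in c and, since a cell lies on at most
   three rays and the ray sizes add up to at most 3|C|, bounded by 3 pbar^k. *)

Local Open Scope R_scope.

Lemma exp_le_exp x y : x <= y -> exp x <= exp y.
Proof.
by case=> [lt_xy | ->]; [apply/Rlt_le/exp_increasing | apply: Rle_refl].
Qed.

Lemma nonneg_derive_mono (f f' : R -> R) x :
  (forall y, derivable_pt_lim f y (f' y)) -> (forall y, 0 <= y -> 0 <= f' y) ->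
  0 <= x -> f 0 <= f x.
Proof.
move=> df f'_ge0 [x_gt0 | <-]; last exact: Rle_refl.
have [c [incr c_in]] := MVT_cor2 f f' 0 x x_gt0 (fun c _ => df c).
have : 0 <= f' c * (x - 0) by apply: Rmult_le_pos; [apply: f'_ge0|]; lra.
lra.
Qed.

(* [tanh y <= y] for [y >= 0]: [y cosh y - sinh y] vanishes at 0 and has
   derivative [y sinh y >= 0]. *)
Lemma sinh_le_mul_cosh y : 0 <= y -> exp y - exp (- y) <= y * (exp y + exp (- y)).
Proof.
move=> y_ge0.
pose F z := z * (exp z + exp (- z)) - (exp z - exp (- z)).
suff: F 0 <= F y by rewrite /F Ropp_0 exp_0; lra.
apply: (nonneg_derive_mono _ (fun z => z * (exp z - exp (- z)))) y_ge0 => [z|z z_ge0].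
  by apply/is_derive_Reals; rewrite /F; auto_derive; [|ring].
by apply: Rmult_le_pos => //; have := exp_le_exp (- z) z ltac:(lra); lra.
Qed.

(* [cosh x <= exp (x^2/2)]: [cosh y * exp (-y^2/2)] is even and, by the
   previous lemma, nonincreasing on [0, oo). *)
Lemma cosh_le_exp_sq x : exp x + exp (- x) <= 2 * exp (x * x / 2).
Proof.
wlog x_ge0 : x / 0 <= x.
  move=> even; case: (Rle_dec 0 x) => [|/Rnot_le_lt x_lt0]; first exact: even.
  by have := even (- x) ltac:(lra); rewrite Ropp_involutive Rmult_opp_opp; lra.
pose L z := - ((exp z + exp (- z)) * exp (- (z * z) / 2)).
suff: L 0 <= L x.
  rewrite /L; have -> : - (0 * 0) / 2 = 0 by field.
  have inv : exp (- (x * x) / 2) * exp (x * x / 2) = 1.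
    by rewrite -exp_plus -exp_0; congr exp; field.
  rewrite Ropp_0 exp_0; have := exp_pos (x * x / 2); nra.
apply: (nonneg_derive_mono _
  (fun z => exp (- (z * z) / 2) * (z * (exp z + exp (- z)) - (exp z - exp (- z))))) x_ge0.
  by move=> z; apply/is_derive_Reals; rewrite /L; auto_derive; [|rewrite /Rdiv; field].
move=> z z_ge0; apply: Rmult_le_pos; first exact/Rlt_le/exp_pos.
by have := sinh_le_mul_cosh z z_ge0; lra.
Qed.

Lemma exp_le_chord lam c y : 0 < c -> Rabs y <= c ->
  exp (lam * y) <=
  (c - y) / (2 * c) * exp (- (lam * c)) + (c + y) / (2 * c) * exp (lam * c).
Proof.
move=> c_gt0 /Rabs_le_between y_in.
have wl : 0 <= (c - y) / (2 * c) by apply: Rmult_le_pos; [|apply/Rlt_le/Rinv_0_lt_compat]; lra.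
have wr : 0 <= (c + y) / (2 * c) by apply: Rmult_le_pos; [|apply/Rlt_le/Rinv_0_lt_compat]; lra.
(* Tangent line of [exp] at [lam * y], evaluated at both endpoints. *)
have tangent z : exp (lam * y) * (1 + (z - lam * y)) <= exp z.
  rewrite -[X in _ <= exp X](Rplus_minus (lam * y)) exp_plus.
  by apply: Rmult_le_compat_l; [exact/Rlt_le/exp_pos | exact: exp_ineq1_le].
have weights : (c - y) / (2 * c) * (1 + (- (lam * c) - lam * y)) +
               (c + y) / (2 * c) * (1 + (lam * c - lam * y)) = 1 by field; lra.
have := Rmult_le_compat_l _ _ _ wl (tangent (- (lam * c))).
have := Rmult_le_compat_l _ _ _ wr (tangent (lam * c)).
have split_e : exp (lam * y) =
    (c - y) / (2 * c) * (exp (lam * y) * (1 + (- (lam * c) - lam * y))) +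
    (c + y) / (2 * c) * (exp (lam * y) * (1 + (lam * c - lam * y))).
  by rewrite -[LHS]Rmult_1_r -[in LHS]weights; ring.
lra.
Qed.

Lemma sum_Rle (T : finType) (F G : T -> R) :
  (forall t, F t <= G t) -> \big[Rplus/R0]_(t : T) F t <= \big[Rplus/R0]_(t : T) G t.
Proof. by move=> FG; apply/RleP/ler_sum => t _; apply/RleP. Qed.

Lemma sum_const_R (T : finType) (x : R) : \big[Rplus/R0]_(t : T) x = INR #|T| * x.
Proof. by rewrite (sumr_const T) INRE RmultE mulr_natl. Qed.

Lemma sum_mulr_R (T : finType) (F : T -> R) (a : R) :
  \big[Rplus/R0]_(t : T) (F t * a) = (\big[Rplus/R0]_(t : T) F t) * a.
Proof. by rewrite RmultE mulr_suml. Qed.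

Lemma sum_mull_R (T : finType) (F : T -> R) (a : R) :
  \big[Rplus/R0]_(t : T) (a * F t) = a * (\big[Rplus/R0]_(t : T) F t).
Proof. by rewrite RmultE mulr_sumr. Qed.

Lemma INR_sum (T : finType) (F : T -> nat) :
  INR (\sum_(t : T) F t)%N = \big[Rplus/R0]_(t : T) INR (F t).
Proof. by rewrite INRE natr_sum; apply: eq_bigr => t _; rewrite INRE. Qed.

Lemma sum_minus_R (T : finType) (F G : T -> R) :
  \big[Rplus/R0]_(t : T) (F t - G t) = \big[Rplus/R0]_(t : T) F t - \big[Rplus/R0]_(t : T) G t.
Proof. by rewrite big_split /= sumrN. Qed.

Lemma hoeffding_lemma (T : finType) (D : T -> R) (c lam : R) : 0 < c ->
  (forall t, Rabs (D t) <= c) -> \big[Rplus/R0]_(t : T) D t = 0 ->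
  \big[Rplus/R0]_(t : T) exp (lam * D t) <= INR #|T| * exp (lam * c * (lam * c) / 2).
Proof.
move=> c_gt0 D_le D_centred.
apply: Rle_trans (sum_Rle _ _ _ (fun t => exp_le_chord lam c (D t) c_gt0 (D_le t))) _.
rewrite (eq_bigr (fun t => (exp (- (lam * c)) + exp (lam * c)) / 2 +
   D t * ((exp (lam * c) - exp (- (lam * c))) / (2 * c)))); last first.
  by move=> t _; field; lra.
rewrite big_split /= sum_const_R sum_mulr_R D_centred Rmult_0_l Rplus_0_r.
apply: Rmult_le_compat_l; first exact: pos_INR.
by have := cosh_le_exp_sq (lam * c); lra.
Qed.

Definition cons_draw (T : finType) k (c : T) (w : {ffun 'I_k -> T}) : {ffun 'I_k.+1 -> T} :=
  [ffun i => if unlift ord0 i is Some j then w j else c].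
Arguments cons_draw {T k}.

Lemma sum_draw_cons (T : finType) k (F : {ffun 'I_k.+1 -> T} -> R) :
  \big[Rplus/R0]_(w : {ffun 'I_k.+1 -> T}) F w =
  \big[Rplus/R0]_(c : T) \big[Rplus/R0]_(w : {ffun 'I_k -> T}) F (cons_draw c w).
Proof.
rewrite pair_big /= (reindex (fun p : T * {ffun 'I_k -> T} => cons_draw p.1 p.2)) //=.
apply: onW_bij; exists (fun w : {ffun 'I_k.+1 -> T} => (w ord0, [ffun j => w (lift ord0 j)])).
  move=> [c w] /=; congr pair; first by rewrite ffunE unlift_none.
  by apply/ffunP => j; rewrite !ffunE liftK.
move=> w; apply/ffunP => i; rewrite !ffunE.
by case: unliftP => [j ->|->]; rewrite ?ffunE.
Qed.

Definition sq_sum (b : nat -> R) k : R := \big[Rplus/R0]_(j < k) (b j * b j).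

(* The statistic
   [G k s w] of [k] uniform draws in state [s] is computed by moving to the
   state [next s c] after the first draw [c]; [m k s] plays the role of its
   mean, the increments [m k (next s c) - m k.+1 s] of the resulting Doob
   martingale are centred and bounded by [b k]. *)
Section RecursiveAzuma.

Variables (T : finType) (I : Type) (next : I -> T -> I).
Variables (G : forall k, I -> {ffun 'I_k -> T} -> R) (m : nat -> I -> R) (b : nat -> R).
Hypothesis G_nil : forall s w, G 0 s w = m 0 s.
Hypothesis G_cons : forall k s c w, G k.+1 s (cons_draw c w) = G k (next s c) w.
Hypothesis drift_centred :
  forall k s, \big[Rplus/R0]_(c : T) (m k (next s c) - m k.+1 s) = 0.
Hypothesis drift_bounded : forall k s c, Rabs (m k (next s c) - m k.+1 s) <= b k.
Hypothesis b_pos : forall k, 0 < b k.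

Lemma recursive_azuma k s lam :
  \big[Rplus/R0]_(w : {ffun 'I_k -> T}) exp (lam * (G k s w - m k s)) <=
  INR #|T| ^ k * exp (lam * lam * sq_sum b k / 2).
Proof.
elim: k s => [|k IH] s.
  rewrite (eq_bigr (fun _ => 1)) => [|w _]; last by rewrite G_nil Rminus_diag Rmult_0_r exp_0.
  rewrite sum_const_R card_ffun card_ord /sq_sum big_ord0 /= Rmult_0_r /Rdiv Rmult_0_l exp_0.
  by rewrite !Rmult_1_r; apply: Rle_refl.
pose E := exp (lam * lam * sq_sum b k / 2).
have first_draw c : \big[Rplus/R0]_(w : {ffun 'I_k -> T})
      exp (lam * (G k.+1 s (cons_draw c w) - m k.+1 s)) <=
    INR #|T| ^ k * E * exp (lam * (m k (next s c) - m k.+1 s)).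
  rewrite (eq_bigr (fun w => exp (lam * (G k (next s c) w - m k (next s c))) *
                             exp (lam * (m k (next s c) - m k.+1 s)))); last first.
    by move=> w _; rewrite G_cons -exp_plus; congr exp; ring.
  by rewrite sum_mulr_R; apply: Rmult_le_compat_r; [exact/Rlt_le/exp_pos | exact: IH].
rewrite sum_draw_cons; apply: Rle_trans (sum_Rle _ _ _ first_draw) _.
rewrite sum_mull_R; apply: Rle_trans.
  apply: Rmult_le_compat_l; first by apply: Rmult_le_pos; [apply/pow_le/pos_INR | exact/Rlt_le/exp_pos].
  exact: (hoeffding_lemma _ _ _ lam (b_pos k) (drift_bounded k s) (drift_centred k s)).
rewrite /E /sq_sum big_ord_recr /= -/(sq_sum b k).
have -> : lam * lam * (sq_sum b k + b k * b k) / 2 =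
  lam * lam * sq_sum b k / 2 + lam * b k * (lam * b k) / 2 by field.
by rewrite exp_plus; apply: Req_le; ring.
Qed.

End RecursiveAzuma.

Lemma sq_sum_geometric p k :
  sq_sum (fun j => 3 * p ^ j) k * (1 - p * p) = 9 * (1 - p ^ (2 * k)%N).
Proof.
rewrite -multE pow_sqr; elim: k => [|k IH]; first by rewrite /sq_sum big_ord0 /=; ring.
by rewrite /sq_sum big_ord_recr /= -/(sq_sum _ k) Rmult_plus_distr_r IH Rpow_mult_distr; ring.
Qed.

Lemma subgaussian_tail (O : finType) (Y : O -> R) V delta : 0 < V -> 0 < delta ->
  (forall lam, \big[Rplus/R0]_(o : O) exp (lam * Y o) <= INR #|O| * exp (lam * lam * V / 2)) ->
  INR #|(fun o => if Rle_dec delta (Rabs (Y o)) then true else false)| / INR #|{: O}|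
    <= 2 * exp (- (delta * delta) / (2 * V)).
Proof.
move=> V_gt0 delta_gt0 mgf; set E := (fun o => _).
pose lam := delta / V.
(* Markov's inequality for [exp (lam Y) + exp (-lam Y)] on the event. *)
have markov : INR #|E| * exp (lam * delta) <=
    \big[Rplus/R0]_(o : O) (exp (lam * Y o) + exp (- lam * Y o)).
  rewrite -sum1_card big_mkcond /= INR_sum -sum_mulr_R.
  apply: sum_Rle => o; rewrite /E [in X in X <= _]/in_mem /=.
  have := exp_pos (lam * Y o); have := exp_pos (- lam * Y o).
  case: Rle_dec => [|_] /=; last by rewrite Rmult_0_l; lra.
  have lam_gt0 : 0 < lam by apply: Rdiv_lt_0_compat.
  rewrite Rmult_1_l; case: (Rle_dec 0 (Y o)) => [Y_ge0|Y_lt0].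
    rewrite Rabs_pos_eq // => le_delta.
    by have := exp_le_exp (lam * delta) (lam * Y o) ltac:(nra); lra.
  rewrite Rabs_left; last by lra.
  by move=> le_delta; have := exp_le_exp (lam * delta) (- lam * Y o) ltac:(nra); lra.
have := mgf lam; have := mgf (- lam); rewrite big_split /= in markov.
rewrite Rmult_opp_opp => mgf_neg mgf_pos.
have card_O := pos_INR #|O|.
have {markov mgf_neg mgf_pos} bound : INR #|E| * exp (lam * delta) <=
    2 * exp (- (delta * delta) / (2 * V)) * (INR #|O| * exp (lam * delta)).
  have -> : 2 * exp (- (delta * delta) / (2 * V)) * (INR #|O| * exp (lam * delta)) =
      2 * (INR #|O| * exp (- (delta * delta) / (2 * V) + lam * delta)).
    by rewrite exp_plus; ring.
  have -> : - (delta * delta) / (2 * V) + lam * delta = lam * lam * V / 2.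
    by rewrite /lam; field; lra.
  lra.
have E_le : INR #|E| <= 2 * exp (- (delta * delta) / (2 * V)) * INR #|O|.
  apply: (Rmult_le_reg_r (exp (lam * delta))); first exact: exp_pos.
  by rewrite Rmult_assoc.
case: (Req_dec (INR #|O|) 0) => [O_empty | O_nonempty].
  rewrite O_empty /Rdiv Rinv_0 Rmult_0_r.
  by apply: Rmult_le_pos; [lra | exact/Rlt_le/exp_pos].
apply: (Rmult_le_reg_r (INR #|O|)); first by lra.
by rewrite /Rdiv Rmult_assoc Rinv_l // Rmult_1_r.
Qed.

Local Open Scope nat_scope.

(* The hexagon has radius [h = (d-1)/2]; in the shifted coordinates
   [x = crd x + h] in [0, 2h] a point is a cell iff [h <= x.1 + x.2 <= 3h]. *)
Definition radius (d : nat) : nat := (d - 1)./2.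

Lemma odd_radius d : odd d -> d = 2 * radius d + 1.
Proof.
move=> d_odd; have := odd_double_half d; rewrite d_odd /radius => d_eq.
have -> : (d - 1)./2 = d./2 by rewrite -{1}d_eq add1n subn1 /= doubleK.
by move: d_eq; rewrite -muln2; lia.
Qed.

Lemma inC_nat d (x : 'I_d * 'I_d) : odd d ->
  inC x = (radius d <= x.1 + x.2 <= 3 * radius d).
Proof.
move=> /odd_radius d_eq; rewrite /inC /crd /hh -/(radius d).
move: (ltn_ord x.1) (ltn_ord x.2) d_eq.
move: (nat_of_ord x.1) (nat_of_ord x.2) (radius d) => a b h a_lt b_lt d_eq.
by case: Z.leb_spec; case: Z.leb_spec; case: Z.leb_spec; case: leqP; case: leqP => /=; lia.
Qed.

(* Rays in shifted coordinates: [x.1 = a], [x.2 = a], [x.1 + x.2 = a + h];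
   all three are written [t == a + s] so that they are counted uniformly. *)
Definition on_ray_shifted {d} (r : ray d) (x : 'I_d * 'I_d) : bool :=
  match nat_of_ord r.1 with
  | 0 => x.1 + 0 == r.2 + 0
  | 1 => x.2 + 0 == r.2 + 0
  | _ => x.1 + x.2 == r.2 + radius d
  end.

Lemma on_ray_shiftedE d (r : ray d) (c : cell d) : on_ray r c = on_ray_shifted r (val c).
Proof.
rewrite /on_ray /on_ray_shifted /crd /hh -/(radius d).
by case: (nat_of_ord r.1) => [|[|?]]; case: Z.eqb_spec => ?; case: eqP => //; lia.
Qed.

Lemma count_interval n (b : bool) lo hi :
  \sum_(i < n) (b && (lo <= i <= hi)) = b * (minn hi.+1 n - lo).
Proof.
elim: n => [|n IH]; first by rewrite big_ord0; lia.
rewrite big_ord_recr /= IH; case: b {IH} => /=; last by lia.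
by case: leqP; case: leqP => /=; lia.
Qed.

Lemma card_cells d (P : 'I_d * 'I_d -> bool) :
  #|[pred c : cell d | P (val c)]| = \sum_(x1 < d) \sum_(x2 < d) (inC (x1, x2) && P (x1, x2)).
Proof.
rewrite -sum1_card big_mkcond pair_bigA /=.
transitivity (\sum_(x | inC x) P x); last first.
  by rewrite big_mkcond; apply: eq_bigr => -[x1 x2] _ /=; case: inC.
rewrite (reindex_omap (val : cell d -> _) insub) => [|x x_in]; last by rewrite insubT.
apply: eq_big => [c|c _]; last by rewrite unfold_in; case: (P _).
by rewrite valK eqxx (valP c).
Qed.

Lemma sum_eq_shift_le1 n t s : \sum_(a < n) (t == a + s) <= 1.
Proof.
rewrite (eq_bigr (fun a : 'I_n => nat_of_bool ((s <= t) && (t - s <= a <= t - s)))) => [|a _].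
  by rewrite count_interval; case: (s <= t); lia.
by case: eqP; case: leqP => /=; lia.
Qed.

Lemma sum_dist_center n h : n = 2 * h + 1 -> \sum_(x < n) ((x - h) + (h - x)) = h * h.+1.
Proof.
move=> ->; elim: h => [|h IH]; first by rewrite big_ord1.
have -> : 2 * h.+1 + 1 = (2 * h + 1).+2 by lia.
rewrite big_ord_recl big_ord_recr /= /bump add1n.
under eq_bigr => x _ do rewrite /bump add1n !subSS.
by rewrite IH; nia.
Qed.

Section Hexagon.

Variable d : nat.
Hypothesis d_odd : odd d.
Let d_eq : d = 2 * radius d + 1 := odd_radius d d_odd.

Lemma cells_on_line (x1 : 'I_d) :
  \sum_(x2 < d) inC (x1, x2) = d - ((x1 - radius d) + (radius d - x1)).
Proof.
rewrite (eq_bigr (fun x2 : 'I_d => nat_of_bool (true && (radius d - x1 <= x2 <= 3 * radius d - x1)))).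
  by rewrite count_interval; have := ltn_ord x1; lia.
by move=> x2 _; rewrite inC_nat //=; have := ltn_ord x1; have := ltn_ord x2; lia.
Qed.

Lemma inC_sym (x1 x2 : 'I_d) : inC (x1, x2) = inC (x2, x1).
Proof. by rewrite !inC_nat //= addnC. Qed.

(* [|C| = d^2 - h (h + 1) = (3 d^2 + 1) / 4]. *)
Lemma ncells_eq : 4 * ncells d = 3 * d ^ 2 + 1.
Proof.
have -> : ncells d = #|[pred c : cell d | true]| by apply: eq_card.
rewrite (card_cells _ (fun=> true)); under eq_bigr => x1 _ do under eq_bigr => x2 _ do rewrite andbT.
rewrite (eq_bigr _ (fun x1 _ => cells_on_line x1)).
have total : \sum_(x1 < d) (d - ((x1 - radius d) + (radius d - x1))) +
    \sum_(x1 < d) ((x1 - radius d) + (radius d - x1)) = d * d.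
  rewrite -big_split /= (eq_bigr (fun=> d)) => [|x1 _].
    by rewrite sum_nat_const card_ord.
  by have := ltn_ord x1; lia.
rewrite (sum_dist_center _ _ d_eq) in total.
move: total; set S := \sum_(i < d) _; move: S d_eq; move: (radius d) => h S ->; nia.
Qed.

Lemma ray_size_nat (r : ray d) :
  ray_size r = \sum_(x1 < d) \sum_(x2 < d) (inC (x1, x2) && on_ray_shifted r (x1, x2)).
Proof.
rewrite /ray_size -card_cells; apply: eq_card => c.
by rewrite !unfold_in /= on_ray_shiftedE.
Qed.

Lemma diagonal_cell_in_column (x1 a : 'I_d) :
  \sum_(x2 < d) (inC (x1, x2) && (x1 + x2 == a + radius d)) =
  (a - radius d <= x1 <= a + radius d).
Proof.
rewrite (eq_bigr (fun x2 : 'I_d => nat_of_bool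
    ((x1 <= a + radius d) && (a + radius d - x1 <= x2 <= a + radius d - x1)))).
  rewrite count_interval; have := ltn_ord x1; have := ltn_ord a.
  by case: leqP; case: leqP => /=; lia.
move=> x2 _; rewrite inC_nat //=; have := ltn_ord x1; have := ltn_ord x2; have := ltn_ord a.
by case: eqP; case: leqP; case: leqP; case: leqP => /=; lia.
Qed.

Lemma ray_size_ge (r : ray d) : radius d + 1 <= ray_size r.
Proof.
have a_lt := ltn_ord r.2.
rewrite ray_size_nat /on_ray_shifted; case: r a_lt => [[[|[|[|i]]] i_lt] a] //= a_lt.
- rewrite (bigD1 a) //= addn0; apply: leq_trans (leq_addr _ _).
  under eq_bigr => x2 _ do rewrite eqxx andbT.
  by rewrite cells_on_line; lia.
- rewrite exchange_big (bigD1 a) //= addn0; apply: leq_trans (leq_addr _ _).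
  under eq_bigr => x1 _ do rewrite eqxx andbT inC_sym.
  by rewrite cells_on_line; lia.
- under eq_bigr => x1 _ do rewrite diagonal_cell_in_column.
  rewrite (eq_bigr (fun x1 : 'I_d => nat_of_bool (true && (a - radius d <= x1 <= a + radius d)))) //.
  by rewrite count_interval; lia.
Qed.

(* Every cell lies on at most three rays, one per direction. *)
Lemma rays_through_cell (c : cell d) : \sum_(r : ray d) on_ray r c <= 3.
Proof.
rewrite -(pair_bigA _ (fun i a => nat_of_bool (on_ray (i, a) c))) /=.
apply: (@leq_trans (\sum_(i < 3) 1)); last by rewrite sum1_card card_ord.
apply: leq_sum => i _.
under eq_bigr => a _ do rewrite on_ray_shiftedE /on_ray_shifted /=.
by case: (nat_of_ord i) => [|[|?]]; apply: sum_eq_shift_le1.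
Qed.

End Hexagon.

Lemma ray_size_sum d (r : ray d) : ray_size r = \sum_(c : cell d) on_ray r c.
Proof. by rewrite /ray_size -sum1_card big_mkcond; apply: eq_bigr => c _; rewrite unfold_in. Qed.

(* Double counting of incidences: the ray sizes add up to at most [3 |C|]. *)
Lemma sum_ray_size d : \sum_(r : ray d) ray_size r <= 3 * ncells d.
Proof.
rewrite (eq_bigr _ (fun r _ => ray_size_sum _ r)) exchange_big /= mulnC -sum_nat_const.
by apply: leq_sum => c _; apply: rays_through_cell.
Qed.

Local Open Scope R_scope.

Lemma ncells_gt0 d : odd d -> 0 < INR (ncells d).
Proof. by move=> /ncells_eq cardC; apply: lt_0_INR; apply/ltP; lia. Qed.

(* [pbar d = 1 - (h + 1) / |C|]: the least ray size is [h + 1]. *)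
Lemma pbar_radius d : odd d -> pbar d = 1 - INR (radius d + 1) / INR (ncells d).
Proof.
move=> d_odd; have C_gt0 := ncells_gt0 d d_odd.
have := f_equal INR (ncells_eq d d_odd); have := f_equal INR (odd_radius d d_odd).
rewrite /pbar !(mult_INR, plus_INR, pow_INR) /= => -> cardC.
set H := INR (radius d) in cardC *; set N := INR (ncells d) in C_gt0 cardC *.
have -> : 3 * ((2 * H + 1) * ((2 * H + 1) * 1)) + 1 = 4 * N by nra.
by field; lra.
Qed.

Lemma pbar_bounds d : (3 <= d)%N -> 0 < pbar d < 1.
Proof.
move=> /leP/le_INR; rewrite /pbar /= => d_ge3.
have den_gt0 : 0 < 3 * (INR d * (INR d * 1)) + 1 by nra.
have : 0 < 2 * (INR d + 1) / (3 * (INR d * (INR d * 1)) + 1) < 1.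
  split; first by apply: Rdiv_lt_0_compat; lra.
  by apply/Rlt_div_l => //; nra.
lra.
Qed.

Section EmptyRays.

Variable d : nat.
Hypothesis d_odd : odd d.

Definition hit_prob (r : ray d) : R := INR (ray_size r) / INR (ncells d).
Definition miss_prob (r : ray d) : R := 1 - hit_prob r.

(* [0 <= q_r <= pbar]: every ray meets at least [h + 1] cells. *)
Lemma miss_prob_bounds (r : ray d) : 0 <= miss_prob r <= pbar d.
Proof.
have C_gt0 := ncells_gt0 d d_odd.
rewrite /miss_prob /hit_prob (pbar_radius d d_odd); split.
  suff : INR (ray_size r) / INR (ncells d) <= 1 by lra.
  by apply/Rle_div_l => //; rewrite Rmult_1_l; apply/le_INR/leP/max_card.
suff : INR (radius d + 1) / INR (ncells d) <= INR (ray_size r) / INR (ncells d) by lra.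
apply: Rmult_le_compat_r; first exact/Rlt_le/Rinv_0_lt_compat.
by apply/le_INR/leP/ray_size_ge.
Qed.

Definition hit_rays (c : cell d) : {set ray d} := [set r | on_ray r c].

Definition empty_outside {k} (S : {set ray d}) (w : draw d k) : R :=
  INR (\sum_(r : ray d) ((r \notin S) && Xr r w)).
Definition weight k (S : {set ray d}) (r : ray d) : R :=
  if r \in S then 0 else miss_prob r ^ k.
Definition mean_empty_outside k (S : {set ray d}) : R :=
  \big[Rplus/R0]_(r : ray d) weight k S r.

(* With no draw left, every ray outside [S] is empty. *)
Lemma empty_outside_nil S (w : draw d 0) : empty_outside S w = mean_empty_outside 0 S.
Proof.
rewrite /empty_outside INR_sum; apply: eq_bigr => r _.
have -> : Xr r w by apply/forallP => -[].
by rewrite /weight andbT; case: (r \in S).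
Qed.

(* After the first draw [c], the rays hit by [c] are no longer candidates. *)
Lemma empty_outside_cons k S c (w : draw d k) :
  empty_outside S (cons_draw c w) = empty_outside (S :|: hit_rays c) w.
Proof.
rewrite /empty_outside; congr INR; apply: eq_bigr => r _.
have -> : Xr r (cons_draw c w) = ~~ on_ray r c && Xr r w.
  apply/forallP/andP => [all_miss | [miss_c /forallP miss_w] i].
    split; first by have := all_miss ord0; rewrite ffunE unlift_none.
    by apply/forallP => j; have := all_miss (lift ord0 j); rewrite ffunE liftK.
  by rewrite ffunE; case: unliftP => [j _|_]; [apply: miss_w | ].
by rewrite in_setU inE negb_or andbA.
Qed.

Lemma mean_drift k S c :
  mean_empty_outside k (S :|: hit_rays c) - mean_empty_outside k.+1 S =
  \big[Rplus/R0]_(r : ray d) (weight k S r * (hit_prob r - INR (on_ray r c))).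
Proof.
rewrite /mean_empty_outside -sum_minus_R; apply: eq_bigr => r _.
rewrite /weight in_setU inE /miss_prob; case: (r \in S); case: (on_ray r c) => /=; ring.
Qed.

(* The increment is centred: a uniform draw hits [r] with probability
   [hit_prob r]. *)
Lemma mean_drift_centred k S :
  \big[Rplus/R0]_(c : cell d)
     (mean_empty_outside k (S :|: hit_rays c) - mean_empty_outside k.+1 S) = 0.
Proof.
rewrite (eq_bigr _ (fun c _ => mean_drift k S c)) exchange_big /=.
apply: big1 => r _; rewrite sum_mull_R sum_minus_R sum_const_R -INR_sum -ray_size_sum.
rewrite [INR #|_|](_ : _ = INR (ncells d)) // /hit_prob.
by have := ncells_gt0 d d_odd => C_gt0; field; lra.
Qed.

Lemma mean_drift_bounded k S c :
  Rabs (mean_empty_outside k (S :|: hit_rays c) - mean_empty_outside k.+1 S) <=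
  3 * pbar d ^ k.
Proof.
have C_gt0 := ncells_gt0 d d_odd.
(* [pbar d >= q_r >= 0] for any ray [r], e.g. the one of direction [0] through [c]. *)
have pk_ge0 : 0 <= pbar d ^ k.
  by apply: pow_le; have [] := miss_prob_bounds (ord0, (val c).1); lra.
have weight_in r : 0 <= weight k S r <= pbar d ^ k.
  have [q_ge0 q_le] := miss_prob_bounds r.
  by rewrite /weight; case: (r \in S); split; [lra | lra | apply: pow_le | apply: pow_incr].
have hit_ge0 r : 0 <= hit_prob r.
  by apply: Rmult_le_pos; [apply: pos_INR | apply/Rlt_le/Rinv_0_lt_compat].
(* [c] lies on at most three rays, and the hit probabilities add up to at
   most three. *)
have hits_c : \big[Rplus/R0]_(r : ray d) INR (on_ray r c) <= 3.
  rewrite -INR_sum (_ : 3 = INR 3); last by rewrite /=; lra.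
  exact/le_INR/leP/rays_through_cell.
have hits_all : \big[Rplus/R0]_(r : ray d) hit_prob r <= 3.
  rewrite /hit_prob /Rdiv sum_mulr_R -INR_sum; apply/Rle_div_l => //.
  have bound := le_INR _ _ (elimT leP (sum_ray_size d)).
  by rewrite mult_INR (_ : INR 3 = 3) in bound; [exact: bound | rewrite /=; ring].
have lower r : - pbar d ^ k * INR (on_ray r c) <=
    weight k S r * (hit_prob r - INR (on_ray r c)).
  by have := weight_in r; have := hit_ge0 r; have := pos_INR (on_ray r c); nra.
have upper r : weight k S r * (hit_prob r - INR (on_ray r c)) <= pbar d ^ k * hit_prob r.
  by have := weight_in r; have := hit_ge0 r; have := pos_INR (on_ray r c); nra.
rewrite mean_drift; apply: Rabs_le; split.
  apply: Rle_trans (sum_Rle _ _ _ lower); rewrite sum_mull_R -Ropp_mult_distr_l.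
  apply: Ropp_le_contravar; rewrite Rmult_comm.
  by apply: Rmult_le_compat_r => //; exact: hits_c.
apply: Rle_trans (sum_Rle _ _ _ upper) _; rewrite sum_mull_R Rmult_comm.
by apply: Rmult_le_compat_r => //; exact: hits_all.
Qed.

End EmptyRays.

Lemma Xcount_empty_outside d k (w : draw d k) : INR (Xcount w) = empty_outside d set0 w.
Proof. by rewrite /empty_outside; congr INR; apply: eq_bigr => r _; rewrite in_set0. Qed.

Lemma NR0_mean d k : NR0 d k = mean_empty_outside d k set0.
Proof. by apply: eq_bigr => r _; rewrite /weight in_set0. Qed.

Lemma zero_measurements_subgaussian d k lam : odd d -> (3 <= d)%N ->
  \big[Rplus/R0]_(w : draw d k) exp (lam * (INR (Xcount w) - NR0 d k)) <=
  INR #|{: draw d k}| * exp (lam * lam * sq_sum (fun j => 3 * pbar d ^ j) k / 2).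
Proof.
move=> d_odd d_ge3; have [p_gt0 _] := pbar_bounds d d_ge3.
under eq_bigr => w _ do rewrite Xcount_empty_outside NR0_mean.
rewrite card_ffun card_ord INRE natrX -INRE -RpowE.
apply: (@recursive_azuma _ _ (fun S c => S :|: hit_rays d c) (fun k S w => empty_outside d S w)).
- exact: empty_outside_nil.
- exact: empty_outside_cons.
- exact: mean_drift_centred.
- exact: mean_drift_bounded.
- by move=> j; apply: Rmult_lt_0_compat; [lra | apply: pow_lt].
Qed.

Theorem proposition3p5 (d k : nat) (delta : R) :
  odd d -> leq 3 d -> leq 1 k -> Rlt 0 delta ->
  Rle (prob (fun w : draw d k =>
           if Rle_dec delta (Rabs (Rminus (INR (Xcount w)) (NR0 d k))) then true else false))
      (Rmult 2 (exp (Rmult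
         (Ropp (Rdiv (Rminus 1 (pow (pbar d) 2))
                     (Rmult 18 (Rminus 1 (pow (pbar d) (muln 2 k))))))
         (pow delta 2)))).
Proof.
move=> d_odd d_ge3 k_ge1 delta_gt0.
have [p_gt0 p_lt1] := pbar_bounds d d_ge3.
set V := sq_sum (fun j => 3 * pbar d ^ j) k.
have V_eq := sq_sum_geometric (pbar d) k; rewrite -/V in V_eq.
have [pk_ge0 pk_lt1] : 0 <= pbar d ^ (2 * k)%N < 1.
  by apply: pow_lt_1_compat; [lra | apply/ltP; rewrite muln_gt0].
have psq_lt1 : 0 < 1 - pbar d * pbar d by nra.
have V_gt0 : 0 < V by nra.
have -> : - ((1 - pbar d ^ 2) / (18 * (1 - pbar d ^ (2 * k)%N))) * delta ^ 2 =
    - (delta * delta) / (2 * V).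
  have -> : 1 - pbar d ^ (2 * k)%N = V * (1 - pbar d * pbar d) / 9 by lra.
  by rewrite /=; field; lra.
rewrite /prob; apply: subgaussian_tail => // lam.
exact: zero_measurements_subgaussian.
Qed.
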